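(* Let $d=s_c+s_e+s_3$ and $$A=\begin{bmatrix}A_1&A_{12}&0\\0&A_2&0\\0&A_{32}&A_3\end{bmatrix},\quad B=\begin{bmatrix}B_1\\0\\0\end{bmatrix},\quad I_1=\begin{bmatrix}I_{s_c}&0&0\\0&0&0\\0&0&0\end{bmatrix},$$ with $A_1\in\mathbb{R}^{s_c\times s_c}$, $A_2\in\mathbb{R}^{s_e\times s_e}$, $A_3\in\mathbb{R}^{s_3\times s_3}$, $B_1\in\mathbb{R}^{s_c\times d_u}$. Let $K=[K_1\ K_2\ 0]\in\mathbb{R}^{d_u\times d}$ (zero on the third block) with $\rho(A+BK)<1$, and let $P_K=\sum_{t\ge0}\big((A+BK)^t\big)^\top(I_1+K^\top K)(A+BK)^t$. Then $$P_K=\begin{bmatrix}P_1&P_{12}&0\\P_{12}^\top&P_2&0\\0&0&0\end{bmatrix}$$ for some matrices $P_1,P_{12},P_2$, i.e. the third block row and column of $P_K$ vanish.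
   Context: $\rho$ denotes the spectral radius. *)

From HB Require Import structures.
From mathcomp Require Import all_boot all_order all_algebra.
From mathcomp Require Import all_classical all_reals all_analysis.
From mathcomp Require Import complex.
Set Implicit Arguments. Unset Strict Implicit. Unset Printing Implicit Defensive.
Import Order.TTheory GRing.Theory Num.Theory.
Local Open Scope ring_scope.

Definition spectral_radius_lt1 (R : realType) (n : nat) (M : 'M[R]_n) : Prop :=
  forall z : R[i], eigenvalue (map_mx (fun x : R => (x%:C)%C) M) z -> `|z| < 1.

Definition PK (R : realType) (n : nat) (M Q : 'M[R]_n) : 'M[R]_n :=
  \matrix_(i, j) limn (fun N : nat =>
      (\sum_(t < N) ((M ^+ t)^T *m Q *m M ^+ t)) i j).

From HB Require Import structures.
From mathcomp Require Import all_boot all_order all_algebra.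
From mathcomp Require Import all_classical all_reals all_analysis.
From mathcomp Require Import complex.
Set Implicit Arguments. Unset Strict Implicit. Unset Printing Implicit Defensive.
Import Order.TTheory GRing.Theory Num.Theory.
Local Open Scope ring_scope.

(* Split the state space as (first two blocks | third block). Then A + BK is
   block lower triangular, hence so are its powers, while the weight
   I1 + K^T K lives on the upper-left block; so every term of the series
   defining P_K, and hence every partial sum, is of the form [[F, 0], [0, 0]].
   Partial sums are moreover symmetric. Both facts are entrywise and survive
   [limn]. The hypothesis rho(A + BK) < 1 only makes the series converge: the
   shape of P_K does not depend on it, so it is left unused. *)

Section BlockTriangular.
Variables (R : pzRingType) (m n : nat).

Lemma ursubmx_lower_block_exp (T : 'M[R]_m) (L : 'M[R]_(n, m)) (D : 'M[R]_n)
    (t : nat) :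
  ursubmx ((block_mx T 0 L D) ^+ t) = 0.
Proof.
elim: t => [|t IH]; first by rewrite expr0 [1]scalar_mx_block block_mxKur.
rewrite exprSr -[_ ^+ t]submxK IH -mulmxE mulmx_block block_mxKur.
by rewrite mulmx0 mul0mx addr0.
Qed.

Lemma mulmx_tr_ul_block (S : 'M[R]_(m + n)) (Q : 'M[R]_m) :
  ursubmx S = 0 ->
  S^T *m block_mx Q 0 0 0 *m S =
    block_mx ((ulsubmx S)^T *m Q *m ulsubmx S) 0 0 0.
Proof.
move=> S_ur0; rewrite -[S in LHS]submxK S_ur0 tr_block_mx trmx0.
by rewrite !mulmx_block !(mulmx0, mul0mx, addr0, add0r).
Qed.

End BlockTriangular.

Section SymmetricBlocks.
Variables (R : comPzRingType) (m n : nat).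

Lemma sym_dsubmx0 (P : 'M[R]_(m + n)) :
  P^T = P -> dsubmx P = 0 -> P = block_mx (ulsubmx P) 0 0 0.
Proof.
move=> P_sym P_d0.
have P_dl0 : dlsubmx P = 0 by rewrite /dlsubmx P_d0 linear0.
have P_dr0 : drsubmx P = 0 by rewrite /drsubmx P_d0 linear0.
have P_ur0 : ursubmx P = 0 by rewrite -[ursubmx P]trmxK trmx_ursub P_sym P_dl0 trmx0.
by rewrite -[P in LHS]submxK P_ur0 P_dl0 P_dr0.
Qed.

Lemma sym_submxK (U : 'M[R]_(m + n)) :
  U^T = U -> block_mx (ulsubmx U) (ursubmx U) (ursubmx U)^T (drsubmx U) = U.
Proof. by move=> U_sym; rewrite trmx_ursub U_sym submxK. Qed.

End SymmetricBlocks.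

Section PKShape.
Variable R : realType.

Lemma PK_tr (k : nat) (M Q : 'M[R]_k) : Q^T = Q -> (PK M Q)^T = PK M Q.
Proof.
move=> Q_sym.
have partial_sym N :
    (\sum_(t < N) ((M ^+ t)^T *m Q *m M ^+ t))^T =
    \sum_(t < N) ((M ^+ t)^T *m Q *m M ^+ t).
  rewrite raddf_sum; apply: eq_bigr => t _ /=.
  by rewrite !trmx_mul trmxK Q_sym mulmxA.
apply/matrixP => i j; rewrite !mxE.
by under eq_fun => N do rewrite -partial_sym mxE.
Qed.

Lemma dsubmx_PK_lower_block (m n : nat) (T : 'M[R]_m) (L : 'M[R]_(n, m))
    (D : 'M[R]_n) (Q : 'M[R]_m) :
  dsubmx (PK (block_mx T 0 L D) (block_mx Q 0 0 0)) = 0.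
Proof.
set M := block_mx T 0 L D; apply/matrixP => i j; rewrite !mxE.
have partial_d0 N :
    (\sum_(t < N) ((M ^+ t)^T *m block_mx Q 0 0 0 *m M ^+ t)) (rshift m i) j = 0.
  rewrite summxE big1 // => t _.
  by rewrite mulmx_tr_ul_block ?ursubmx_lower_block_exp // block_mxEv col_mxEd row_mx0 mxE.
under eq_fun => N do rewrite partial_d0.
by rewrite lim_cst.
Qed.

End PKShape.

Theorem lemma3 (R : realType) (sc se s3 du : nat)
  (A1 : 'M[R]_sc) (A12 : 'M[R]_(sc, se)) (A2 : 'M[R]_se)
  (A32 : 'M[R]_(s3, se)) (A3 : 'M[R]_s3) (B1 : 'M[R]_(sc, du))
  (K1 : 'M[R]_(du, sc)) (K2 : 'M[R]_(du, se)) :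
  let A : 'M[R]_(sc + se + s3) :=
    block_mx (block_mx A1 A12 0 A2) 0 (row_mx 0 A32) A3 in
  let B : 'M[R]_(sc + se + s3, du) := col_mx (col_mx B1 0) 0 in
  let I1 : 'M[R]_(sc + se + s3) :=
    block_mx (block_mx (1%:M : 'M[R]_sc) 0 0 0) 0 0 0 in
  let K : 'M[R]_(du, sc + se + s3) := row_mx (row_mx K1 K2) 0 in
  spectral_radius_lt1 (A + B *m K) ->
  exists (P1 : 'M[R]_sc) (P12 : 'M[R]_(sc, se)) (P2 : 'M[R]_se),
    PK (A + B *m K) (I1 + K^T *m K) =
      block_mx (block_mx P1 P12 P12^T P2) 0 0 0.
Proof.
move=> A B I1 K _.
set Q := block_mx (1%:M : 'M[R]_sc) 0 0 0 + (row_mx K1 K2)^T *m row_mx K1 K2.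
have Q_sym : Q^T = Q.
  by rewrite linearD /= trmx_mul trmxK tr_block_mx !trmx0 trmx1.
have weight_ul : I1 + K^T *m K = block_mx Q 0 0 0.
  by rewrite tr_row_mx trmx0 mul_col_row !(mulmx0, mul0mx) add_block_mx !addr0.
have closed_loop_lower : A + B *m K =
    block_mx (block_mx A1 A12 0 A2 + col_mx B1 0 *m row_mx K1 K2) 0 (row_mx 0 A32) A3.
  by rewrite mul_col_row !(mulmx0, mul0mx) add_block_mx !addr0.
rewrite weight_ul closed_loop_lower.
set P := PK _ _.
have P_sym : P^T = P by apply: PK_tr; rewrite tr_block_mx !trmx0 Q_sym.
have U_sym : (ulsubmx P)^T = ulsubmx P by rewrite trmx_ulsub P_sym.
rewrite (sym_dsubmx0 P_sym (dsubmx_PK_lower_block _ _ _ _)) -(sym_submxK U_sym).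
by do 3!eexists.
Qed.
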